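(* Let $x \in \mathbb{R}$ with $1 - x - x^2 \neq 0$, let $m \geq 1$ be an integer and let $n \geq 0$ be an integer. Then \[ \sum_{r=1}^{n} r^m F_r x^r = \frac{1}{1 - x - x^2} \sum_{i=1}^m \binom{m}{i} (-1)^{i + 1} \sum_{r=1}^n r^{m - i} F_r x^r + \frac{x^2}{1 - x - x^2} \sum_{i=1}^m \binom{m}{i} \sum_{r=1}^{n-1} r^{m - i} F_r x^r - \frac{n^m (F_{n+1} x^{n+1} + F_n x^{n+2})}{1 - x - x^2}. \]
   Context: $(F_r)_{r \geq 0}$ is the Fibonacci sequence: $F_0 = 0$, $F_1 = 1$, $F_r = F_{r-1} + F_{r-2}$ for $r \geq 2$. Empty sums are $0$. *)

From mathcomp Require Import all_boot all_order all_algebra.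
From mathcomp Require Import reals.
Set Implicit Arguments. Unset Strict Implicit. Unset Printing Implicit Defensive.

Fixpoint fib (r : nat) : nat :=
  match r with
  | 0 => 0
  | 1 => 1
  | (S ((S r'') as r')) as _ => fib r' + fib r''
  end.

From mathcomp Require Import all_boot all_order all_algebra.
From mathcomp Require Import reals.
From mathcomp Require Import ring.
Import Order.TTheory GRing.Theory Num.Theory.
Local Open Scope ring_scope.

(* Clearing the denominator 1 - x - x^2, the identity is proved by induction
   on n over any commutative ring.  Going from n to n+1, the binomial theorem
   collapses the two inner sums over i into ((n+1)^m - n^m) F_(n+1) x^(n+1)
   and ((n+1)^m - n^m) F_n x^n, and the Fibonacci recurrence
   F_(n+2) = F_(n+1) + F_n makes the increments of both sides agree. *)

Lemma sum_binomial_alt (R : comNzRingType) (a : R) (m : nat) :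
  \sum_(1 <= i < m.+1) ('C(m, i)%:R * (-1) ^+ (i + 1) * a ^+ (m - i))
  = a ^+ m - (a - 1) ^+ m.
Proof.
rewrite [in RHS]exprDn big_ord_recl /= subn0 bin0 expr0 mulr1 mulr1n.
rewrite opprD addrA subrr add0r -sumrN big_add1 /= big_mkord.
apply: eq_bigr => i _.
rewrite addn1 /bump /= add1n exprS mulN1r -mulNrn -mulr_natr; ring.
Qed.

Lemma sum_binomial_tail (R : comNzRingType) (a : R) (m : nat) :
  \sum_(1 <= i < m.+1) ('C(m, i)%:R * a ^+ (m - i)) = (a + 1) ^+ m - a ^+ m.
Proof.
rewrite [in RHS]exprDn big_ord_recl /= subn0 bin0 expr0 mulr1 mulr1n.
rewrite addrC addKr big_add1 /= big_mkord.
by apply: eq_bigr => i _; rewrite expr1n mulr1 mulr_natl.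
Qed.

Lemma natr_fibSS (R : nzSemiRingType) (n : nat) :
  (fib n.+2)%:R = (fib n.+1)%:R + (fib n)%:R :> R.
Proof. by rewrite -natrD. Qed.

Section FibMoments.
Variables (R : comNzRingType) (x : R) (m : nat).

(* The bound [k] is exclusive: the paper's sum up to [n] is [fib_moment j n.+1]. *)
Definition fib_moment (j k : nat) : R :=
  \sum_(1 <= r < k) (r%:R ^+ j * (fib r)%:R * x ^+ r).

Lemma fib_moment0 j : fib_moment j 0 = 0.
Proof. by rewrite /fib_moment big_geq. Qed.

Lemma fib_moment1 j : fib_moment j 1 = 0.
Proof. by rewrite /fib_moment big_geq. Qed.

Lemma fib_momentS j k :
  fib_moment j k.+1 = fib_moment j k + k%:R ^+ j * (fib k)%:R * x ^+ k.
Proof.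
case: k => [|k]; last by rewrite /fib_moment big_nat_recr.
by rewrite fib_moment0 fib_moment1 add0r mulr0 mul0r.
Qed.

Definition alt_binomial_moment (k : nat) : R :=
  \sum_(1 <= i < m.+1) ('C(m, i)%:R * (-1) ^+ (i + 1) * fib_moment (m - i) k).

Definition binomial_moment (k : nat) : R :=
  \sum_(1 <= i < m.+1) ('C(m, i)%:R * fib_moment (m - i) k).

Lemma alt_binomial_momentS k :
  alt_binomial_moment k.+1 = alt_binomial_moment k
    + (k%:R ^+ m - (k%:R - 1) ^+ m) * (fib k)%:R * x ^+ k.
Proof.
rewrite /alt_binomial_moment -sum_binomial_alt !mulr_suml -big_split /=.
by apply: eq_bigr => i _; rewrite fib_momentS; ring.
Qed.

Lemma binomial_momentS k :
  binomial_moment k.+1 = binomial_moment k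
    + ((k%:R + 1) ^+ m - k%:R ^+ m) * (fib k)%:R * x ^+ k.
Proof.
rewrite /binomial_moment -sum_binomial_tail !mulr_suml -big_split /=.
by apply: eq_bigr => i _; rewrite fib_momentS; ring.
Qed.

Lemma fib_moment_identity n : (0 < m)%N ->
  (1 - x - x ^+ 2) * fib_moment m n.+1 =
    alt_binomial_moment n.+1 + x ^+ 2 * binomial_moment n
    - n%:R ^+ m * ((fib n.+1)%:R * x ^+ n.+1 + (fib n)%:R * x ^+ n.+2).
Proof.
move=> m_gt0; elim: n => [|n IHn].
  rewrite /alt_binomial_moment /binomial_moment fib_moment1.
  rewrite big1 => [|i _]; last by rewrite fib_moment1 mulr0.
  rewrite big1 => [|i _]; last by rewrite fib_moment0 mulr0.
  rewrite expr0n eqn0Ngt m_gt0 /=; ring.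
rewrite fib_momentS mulrDr IHn (alt_binomial_momentS n.+1) binomial_momentS.
by rewrite natr_fibSS -natr1 addrK !exprS; ring.
Qed.

End FibMoments.

Theorem theorem2p1 (R : realType) (x : R) (m n : nat)
  (hx : 1 - x - x ^+ 2 != 0) (hm : (1 <= m)%N) :
  \sum_(1 <= r < n.+1) (r%:R ^+ m * (fib r)%:R * x ^+ r)
  = (1 - x - x ^+ 2)^-1 *
      \sum_(1 <= i < m.+1) ('C(m, i)%:R * (-1) ^+ (i + 1) *
         \sum_(1 <= r < n.+1) (r%:R ^+ (m - i) * (fib r)%:R * x ^+ r))
    + x ^+ 2 / (1 - x - x ^+ 2) *
      \sum_(1 <= i < m.+1) ('C(m, i)%:R *
         \sum_(1 <= r < n) (r%:R ^+ (m - i) * (fib r)%:R * x ^+ r))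
    - n%:R ^+ m * ((fib n.+1)%:R * x ^+ n.+1 + (fib n)%:R * x ^+ n.+2)
      / (1 - x - x ^+ 2).
Proof.
apply: (mulfI hx).
have := @fib_moment_identity _ x m n hm.
rewrite /alt_binomial_moment /binomial_moment /fib_moment => ->.
(* Abstracting the inner sums keeps [field] from unfolding them. *)
move: (\sum_(1 <= i < m.+1) _) (\sum_(1 <= i < m.+1) _) => a b.
by field.
Qed.
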